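(* Let $(T,\sigma)$ be a confluent temperature-1 TAS with maximal producible assembly $\alpha_{\max}$, and let $x\in\mathrm{Dom}(\alpha_{\max})$. Let $p$ be a finite free path such that there is an assembly (not necessarily producible) whose binding graph contains the path $x.p$ and which places the tile $\alpha_{\max}(x)$ at $x$. If $\mathrm{Dom}(x.p)\subseteq \mathrm{NC}(x)$, then the path $x.p$ is a subgraph of the binding graph of $\alpha_{\max}$.
   Context: Directions $D=\{E=(1,0),N=(0,1),S=(0,-1),W=(-1,0)\}$; $\mathbb Z^2$ is the grid graph; a free path is a word over $D$ whose associated walk is simple; $A.m$ is the path starting at $A$ following $m$; $\vec m$ is the displacement (sum of letters) of finite $m$. A tile type is a map $t:D\to\Sigma$ ($\Sigma$ a finite glue set), $t_d$ its glue on side $d$. A temperature-1 TAS is $(T,\sigma)$, $T$ finite set of tile types, $\sigma$ the seed tile type. An assembly is a partial map $\alpha:\mathbb Z^2\to T\cup\{\sigma\}$; its binding graph has vertices $\mathrm{Dom}(\alpha)$ and an edge $\{v,v+d\}$ iff $\alpha(v)_d=\alpha(v+d)_{-d}$; it is stable if the binding graph is connected, producible if stable and $\alpha((0,0))=\sigma$. The TAS is confluent if any two producible assemblies agree on their common domain; then there is a unique producible assembly $\alpha_{\max}$ whose domain contains the domain of every producible assembly. Non-causal set: for $x\in\mathbb Z^2$, $\mathrm{NC}(x)=\{y\in\mathbb Z^2: \exists$ a finite free path $m$ with $(0,0).m$ a subgraph of the binding graph of $\alpha_{\max}$, $(0,0)+\vec m=x$ and $y\notin \mathrm{Dom}((0,0).m)\}\cup\{x\}$.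 *)

From Stdlib Require Import ZArith List.
Import ListNotations.
Open Scope Z_scope.

Inductive dir : Type := E | N | S | W.

Definition pos : Type := (Z * Z)%type.

Definition vec (d : dir) : pos :=
  match d with E => (1, 0) | N => (0, 1) | S => (0, -1) | W => (-1, 0) end.

Definition opp (d : dir) : dir :=
  match d with E => W | N => S | S => N | W => E end.

Definition shift (v : pos) (d : dir) : pos :=
  (fst v + fst (vec d), snd v + snd (vec d)).

Fixpoint walk (A : pos) (m : list dir) : list pos :=
  match m with
  | [] => [A]
  | d :: m' => A :: walk (shift A d) m'
  end.

Fixpoint endp (A : pos) (m : list dir) : pos :=
  match m with
  | [] => A
  | d :: m' => endp (shift A d) m'
  end.

(* free path: its walk is simple (translation invariant, test from origin) *)
Definition free (m : list dir) : Prop := NoDup (walk (0, 0) m).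

Definition tile (Sigma : Type) : Type := dir -> Sigma.

Definition assembly {Sigma : Type} (T : list (tile Sigma)) (sigma : tile Sigma)
  (a : pos -> option (tile Sigma)) : Prop :=
  forall v t, a v = Some t -> In t T \/ t = sigma.

Definition in_dom {Sigma : Type} (a : pos -> option (tile Sigma)) (v : pos) : Prop :=
  a v <> None.

(* edge {v, v+d} of the binding graph *)
Definition binds {Sigma : Type} (a : pos -> option (tile Sigma)) (v : pos) (d : dir) : Prop :=
  exists t t', a v = Some t /\ a (shift v d) = Some t' /\ t d = t' (opp d).

Fixpoint path_in {Sigma : Type} (a : pos -> option (tile Sigma)) (A : pos) (m : list dir) : Prop :=
  match m with
  | [] => in_dom a A
  | d :: m' => binds a A d /\ path_in a (shift A d) m'
  end.

Definition stable {Sigma : Type} (a : pos -> option (tile Sigma)) : Prop :=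
  forall u v, in_dom a u -> in_dom a v ->
    exists m, path_in a u m /\ endp u m = v.

Definition producible {Sigma : Type} (T : list (tile Sigma)) (sigma : tile Sigma)
  (a : pos -> option (tile Sigma)) : Prop :=
  assembly T sigma a /\ stable a /\ a (0, 0) = Some sigma.

Definition confluent {Sigma : Type} (T : list (tile Sigma)) (sigma : tile Sigma) : Prop :=
  forall a b, producible T sigma a -> producible T sigma b ->
    forall v, in_dom a v -> in_dom b v -> a v = b v.

Definition is_max_producible {Sigma : Type} (T : list (tile Sigma)) (sigma : tile Sigma)
  (amax : pos -> option (tile Sigma)) : Prop :=
  producible T sigma amax /\
  forall b, producible T sigma b -> forall v, in_dom b v -> in_dom amax v.

Definition NC {Sigma : Type} (amax : pos -> option (tile Sigma)) (x y : pos) : Prop :=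
  (exists m, free m /\ path_in amax (0, 0) m /\ endp (0, 0) m = x /\
             ~ In y (walk (0, 0) m))
  \/ y = x.

(** A tile that can attach to a producible assembly of a confluent system is the
    tile of the maximal assembly at that position.  Walk along [x.p]: at each new
    position [z], the non-causality hypothesis yields a path of [amax] from the
    seed to [x] avoiding [z]; together with the already verified prefix of
    [x.p], it spans a producible sub-assembly of [amax] (connected through [x])
    to which the tile of [b] at [z] can attach.  Confluence and maximality then
    force [amax z = b z], so the next edge of [x.p] is an edge of [amax]. *)

From Pilot Require Import Defs.
From Stdlib Require Import ZArith List Lia FinFun.
Import ListNotations.
(* Re-import so that [shift] refers to [Defs.shift], not [Zpower.shift]. *)
Import Pilot.Defs.
Open Scope Z_scope.

Definition pos_eq_dec (u v : pos) : {u = v} + {u <> v}.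
Proof. decide equality; apply Z.eq_dec. Defined.

Lemma opp_involutive (d : dir) : opp (opp d) = d.
Proof. destruct d; reflexivity. Qed.

Lemma shift_opp (v : pos) (d : dir) : shift (shift v d) (opp d) = v.
Proof. destruct v, d; unfold shift; simpl; f_equal; lia. Qed.

Lemma in_walk_head (u : pos) (m : list dir) : In u (walk u m).
Proof. destruct m; simpl; auto. Qed.

Lemma in_walk_endp (u : pos) (m : list dir) : In (endp u m) (walk u m).
Proof. revert u; induction m; simpl; auto. Qed.

Lemma endp_app (u : pos) (m m' : list dir) : endp u (m ++ m') = endp (endp u m) m'.
Proof. revert u; induction m; simpl; auto. Qed.

Lemma walk_app_cons (u : pos) (m : list dir) (d : dir) (m' : list dir) :
  walk u (m ++ d :: m') = walk u m ++ walk (shift (endp u m) d) m'.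
Proof. revert u; induction m as [|d' m IH]; intro u; simpl; [|rewrite IH]; reflexivity. Qed.

Lemma in_walk_app (u v : pos) (m m' : list dir) :
  In v (walk u (m ++ m')) <-> In v (walk u m) \/ In v (walk (endp u m) m').
Proof.
  revert u; induction m as [|d m IH]; intro u; simpl.
  - split; [auto|intros [[<-|[]]|H]; auto using in_walk_head].
  - rewrite IH; tauto.
Qed.

Lemma NoDup_app_disjoint {A : Type} (l l' : list A) (a : A) :
  NoDup (l ++ l') -> In a l -> ~ In a l'.
Proof.
  induction l as [|a0 l IH]; simpl; [tauto|].
  intros Hnd [<-|Ha] Ha'.
  - apply NoDup_cons_iff in Hnd. apply (proj1 Hnd), in_or_app; auto.
  - exact (IH (proj2 (proj1 (NoDup_cons_iff _ _) Hnd)) Ha Ha').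
Qed.

Definition translate (w v : pos) : pos := (fst w + fst v, snd w + snd v).

Lemma walk_translate (w u : pos) (m : list dir) :
  walk (translate w u) m = map (translate w) (walk u m).
Proof.
  revert u; induction m as [|d m IH]; intro u; simpl; auto.
  rewrite <- IH. do 2 f_equal.
  destruct w, u, d; unfold translate, shift; simpl; f_equal; lia.
Qed.

Lemma free_walk_NoDup (x : pos) (p : list dir) : free p -> NoDup (walk x p).
Proof.
  intro Hfree.
  replace x with (translate x (0, 0)) by (destruct x; unfold translate; simpl; f_equal; lia).
  rewrite walk_translate. apply Injective_map_NoDup; [|exact Hfree].
  intros [a1 a2] [c1 c2] Heq. unfold translate in Heq; simpl in Heq.
  injection Heq; intros; f_equal; lia.
Qed.

Section Assemblies.

Context {Sigma : Type}.
Implicit Types a b c : pos -> option (tile Sigma).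

Definition connected a (u v : pos) : Prop :=
  exists m, path_in a u m /\ endp u m = v.

Definition restrict a (K : list pos) : pos -> option (tile Sigma) :=
  fun v => if in_dec pos_eq_dec v K then a v else None.

Definition extend a (z : pos) (t : tile Sigma) : pos -> option (tile Sigma) :=
  fun v => if pos_eq_dec v z then Some t else a v.

Lemma path_in_dom a u m : path_in a u m -> in_dom a u.
Proof.
  destruct m as [|d m]; simpl; auto.
  intros [[t [t' [Hu _]]] _]. unfold in_dom; congruence.
Qed.

Lemma path_in_walk_dom a u m v : path_in a u m -> In v (walk u m) -> in_dom a v.
Proof.
  revert u; induction m as [|d m IH]; intros u Hp Hv; simpl in *.
  - destruct Hv as [<-|[]]; exact Hp.
  - destruct Hv as [<-|Hv]; [exact (path_in_dom a u (d :: m) Hp)|].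
    exact (IH _ (proj2 Hp) Hv).
Qed.

Lemma path_in_app a u m m' :
  path_in a u (m ++ m') <-> path_in a u m /\ path_in a (endp u m) m'.
Proof.
  revert u; induction m as [|d m IH]; intro u; simpl.
  - split; [intro H; split; [exact (path_in_dom a u m' H)|exact H]|tauto].
  - rewrite IH; tauto.
Qed.

Lemma path_in_agree a c u m :
  path_in a u m -> (forall v, In v (walk u m) -> c v = a v) -> path_in c u m.
Proof.
  revert u; induction m as [|d m IH]; intros u Hp Hagree; simpl in *.
  - unfold in_dom in *. rewrite Hagree; auto.
  - destruct Hp as [[t [t' [Hu [Hz Hg]]]] Hp]. split.
    + exists t, t'. rewrite !Hagree; auto using in_walk_head.
    + apply IH; auto.
Qed.

Lemma binds_opp a v d : binds a v d -> binds a (shift v d) (opp d).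
Proof.
  intros [t [t' [Hv [Hw Hg]]]]. exists t', t.
  rewrite shift_opp, opp_involutive. auto.
Qed.

Lemma connected_trans a u v w : connected a u v -> connected a v w -> connected a u w.
Proof.
  intros [m [Hm <-]] [m' [Hm' <-]]. exists (m ++ m').
  rewrite path_in_app, endp_app. auto.
Qed.

Lemma connected_sym a u v : connected a u v -> connected a v u.
Proof.
  intros [m [Hm <-]]. revert u Hm; induction m as [|d m IH]; intros u Hm; simpl.
  - exists []. auto.
  - destruct Hm as [Hb Hm]. apply connected_trans with (shift u d); [now apply IH|].
    exists [opp d]. simpl. rewrite shift_opp.
    repeat split; [now apply binds_opp|exact (path_in_dom a u (d :: m) (conj Hb Hm))].
Qed.

Lemma connected_walk_endp a u m v :
  path_in a u m -> In v (walk u m) -> connected a v (endp u m).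
Proof.
  revert u; induction m as [|d m IH]; intros u Hm Hv; simpl in *.
  - destruct Hv as [<-|[]]. exists []. auto.
  - destruct Hv as [<-|Hv]; [exists (d :: m); simpl; auto|].
    exact (IH _ (proj2 Hm) Hv).
Qed.

Lemma connected_ext a c u v :
  (forall w, in_dom a w -> c w = a w) -> connected a u v -> connected c u v.
Proof.
  intros Hext [m [Hm Hend]]. exists m. split; [|exact Hend].
  apply (path_in_agree a); [exact Hm|].
  intros w Hw. exact (Hext w (path_in_walk_dom a u m w Hm Hw)).
Qed.

Lemma stable_of_hub a h : (forall v, in_dom a v -> connected a v h) -> stable a.
Proof.
  intros Hhub u v Hu Hv.
  exact (connected_trans a u h v (Hhub u Hu) (connected_sym a v h (Hhub v Hv))).
Qed.

Variables (T : list (tile Sigma)) (sigma : tile Sigma).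

Lemma producible_restrict_walk a w :
  producible T sigma a -> path_in a (0, 0) w ->
  producible T sigma (restrict a (walk (0, 0) w)).
Proof.
  intros [Hasm [_ Hseed]] Hw.
  set (K := walk (0, 0) w).
  assert (Hin : forall v, In v K -> restrict a K v = a v)
    by (intros v Hv; unfold restrict; destruct in_dec; tauto).
  split; [|split].
  - intros v t Hv. unfold restrict in Hv. destruct in_dec; [exact (Hasm v t Hv)|discriminate].
  - apply stable_of_hub with (endp (0, 0) w). intros v Hv.
    assert (HvK : In v K)
      by (unfold in_dom, restrict in Hv; destruct in_dec; tauto).
    apply connected_walk_endp; [apply (path_in_agree a)|]; auto.
  - rewrite Hin; [exact Hseed|apply in_walk_head].
Qed.

Lemma producible_extend a u d s t :
  producible T sigma a -> a (shift u d) = None -> In t T \/ t = sigma ->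
  a u = Some s -> s d = t (opp d) ->
  producible T sigma (extend a (shift u d) t).
Proof.
  intros [Hasm [Hstab Hseed]] Hz Ht Hu Hglue.
  set (z := shift u d) in *. set (c := extend a z t).
  assert (Hagree : forall v, in_dom a v -> c v = a v).
  { intros v Hv. unfold c, extend. destruct pos_eq_dec as [->|]; [contradiction|reflexivity]. }
  assert (Huc : c u = Some s) by (rewrite Hagree; unfold in_dom; congruence).
  split; [|split].
  - intros v t' Hv. unfold c, extend in Hv.
    destruct pos_eq_dec; [injection Hv as <-; exact Ht|exact (Hasm v t' Hv)].
  - apply stable_of_hub with u. intros v Hv.
    destruct (pos_eq_dec v z) as [->|Hvz].
    + exists [opp d]. unfold z. simpl. rewrite shift_opp.
      split; [split; [|unfold in_dom; congruence]|reflexivity].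
      exists t, s. rewrite shift_opp, opp_involutive. repeat split; auto.
      unfold c, extend. destruct pos_eq_dec; tauto.
    + assert (Hva : in_dom a v)
        by (unfold in_dom, c, extend in Hv; destruct pos_eq_dec; tauto).
      apply (connected_ext a c); [exact Hagree|].
      apply Hstab; [exact Hva|unfold in_dom; congruence].
  - rewrite Hagree; [exact Hseed|unfold in_dom; congruence].
Qed.

Lemma max_producible_attach amax w u d s t :
  confluent T sigma -> is_max_producible T sigma amax ->
  path_in amax (0, 0) w -> In u (walk (0, 0) w) -> ~ In (shift u d) (walk (0, 0) w) ->
  In t T \/ t = sigma -> amax u = Some s -> s d = t (opp d) ->
  amax (shift u d) = Some t.
Proof.
  intros Hconf [Hprod Hmax] Hw Hu Hz Ht Hs Hglue.
  set (K := walk (0, 0) w). set (a := restrict amax K).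
  assert (Hza : a (shift u d) = None) by (unfold a, restrict; destruct in_dec; tauto).
  assert (Hua : a u = Some s) by (unfold a, restrict; destruct in_dec; tauto).
  assert (Hc := producible_extend a u d s t
                  (producible_restrict_walk amax w Hprod Hw) Hza Ht Hua Hglue).
  assert (Hzc : extend a (shift u d) t (shift u d) = Some t)
    by (unfold extend; destruct pos_eq_dec; tauto).
  rewrite <- Hzc. symmetry.
  apply (Hconf _ _ Hc Hprod); [|apply (Hmax _ Hc)]; unfold in_dom; congruence.
Qed.

Lemma max_producible_path_snoc amax b x q d :
  confluent T sigma -> is_max_producible T sigma amax -> assembly T sigma b ->
  path_in amax x q -> amax (endp x q) = b (endp x q) -> binds b (endp x q) d ->
  ~ In (shift (endp x q) d) (walk x q) -> NC amax x (shift (endp x q) d) ->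
  path_in amax x (q ++ [d]) /\ amax (shift (endp x q) d) = b (shift (endp x q) d).
Proof.
  intros Hconf Hmax Hb Hq Hy [t [t' [Hbt [Hbt' Hglue]]]] Hnew HNC.
  set (y := endp x q) in *. set (z := shift y d) in *.
  assert (Hz : amax z = b z).
  { destruct HNC as [[w [_ [Hw [Hwx Hwz]]]]|Hzx];
      [|rewrite Hzx in Hnew; contradiction (Hnew (in_walk_head x q))].
    rewrite Hbt'. apply max_producible_attach with (w ++ q) t.
    - exact Hconf.
    - exact Hmax.
    - apply path_in_app. rewrite Hwx. auto.
    - apply in_walk_app. rewrite Hwx. right. apply in_walk_endp.
    - rewrite in_walk_app, Hwx. tauto.
    - destruct (Hb z t' Hbt'); auto.
    - congruence.
    - exact Hglue. }
  split; [|exact Hz].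
  apply path_in_app. split; [exact Hq|]. fold y. simpl. fold z.
  split; [exists t, t'; fold z; rewrite Hy, Hz; auto|unfold in_dom; congruence].
Qed.

End Assemblies.

Theorem mainTheorem3 (Sigma : Type) (Sigma_finite : exists l : list Sigma, forall g, In g l)
  (T : list (tile Sigma)) (sigma : tile Sigma)
  (amax : pos -> option (tile Sigma)) :
  confluent T sigma ->
  is_max_producible T sigma amax ->
  forall (x : pos), in_dom amax x ->
  forall (p : list dir), free p ->
  forall (b : pos -> option (tile Sigma)),
    assembly T sigma b -> path_in b x p -> b x = amax x ->
  (forall y, In y (walk x p) -> NC amax x y) ->
  path_in amax x p.
Proof.
  intros Hconf Hmax x Hx p Hfree b Hb Hpb Hbx HNC.
  assert (Hnd := free_walk_NoDup x p Hfree).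
  enough (Hprefix : forall q r, q ++ r = p ->
            path_in amax x q /\ amax (endp x q) = b (endp x q))
    by exact (proj1 (Hprefix p [] (app_nil_r p))).
  intro q; induction q as [|d q IH] using rev_ind; intros r Hqr; [split; auto|].
  rewrite <- app_assoc in Hqr. simpl in Hqr. subst p.
  destruct (IH _ eq_refl) as [Hq Hy].
  rewrite walk_app_cons in Hnd, HNC.
  rewrite endp_app. simpl.
  apply (max_producible_path_snoc T sigma); auto.
  - apply path_in_app in Hpb. exact (proj1 (proj2 Hpb)).
  - intro Hin. apply (NoDup_app_disjoint _ _ _ Hnd Hin), in_walk_head.
  - apply HNC, in_or_app. right. apply in_walk_head.
Qed.
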